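(* Let $f\geq 1$, $\mathbf{K}=\mathbf{Q}(\zeta_f)$, $n=\varphi(f)$, and let $A$ be a $d\times d$ unitriangular matrix (upper triangular with ones on the diagonal) with coefficients in $\mathbf{K}$ such that every coefficient, written in the power basis $1,\zeta_f,\dots,\zeta_f^{n-1}$, has all its rational coordinates bounded by $1$ in absolute value. Then $\|A\|\leq dn^{3/2}$ and $\|A^{-1}\|=(2n)^{O(d)}$.
   Context: $\mathbf{K}^d$ carries the Hermitian form $\langle x,y\rangle=\sum_t\mathrm{tr}_{\mathbf{K}/\mathbf{Q}}(x_t\overline{y_t})$ and $\|\cdot\|$ is the induced operator norm on matrices. *)

(* The cyclotomic field K = Q(zeta_f) is realised inside the
   algebraic complex numbers algC as Q[z] for z a primitive f-th root of unity.
   An element of K is represented by a rational polynomial p, standing for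
   p(z); a vector of K^d by a column vector of rational polynomials, and a
   d x d matrix over K by a matrix of rational polynomials.  Since evaluation
   at z is a ring morphism, (A *m P) represents the product A x. *)
From HB Require Import structures.
From mathcomp Require Import all_boot all_order all_algebra algC.
Set Implicit Arguments. Unset Strict Implicit. Unset Printing Implicit Defensive.
Import Order.TTheory GRing.Theory Num.Theory.
Local Open Scope ring_scope.

Definition ev (p : {poly rat}) (x : algC) : algC := (map_poly (@ratr algC) p).[x].

Definition trK (f : nat) (z : algC) (p : {poly rat}) : algC :=
  \sum_(k < f | coprime k f) ev p (z ^+ k).

(* complex conjugation on K: conj(p(z)) = p(z^{-1}) = p(z^{f-1}) *)
Definition conjK (f : nat) (p : {poly rat}) : {poly rat} := p \Po 'X^(f.-1).

Definition hermK (f : nat) (z : algC) (d : nat) (x y : 'cV[{poly rat}]_d) : algC :=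
  \sum_(t < d) trK f z (x t 0 * conjK f (y t 0)).

Definition normK (f : nat) (z : algC) (d : nat) (x : 'cV[{poly rat}]_d) : algC :=
  sqrtC (hermK f z x x).

Definition opnorm_le (f : nat) (z : algC) (d : nat) (M : 'M[{poly rat}]_d) (c : algC) : Prop :=
  forall x : 'cV[{poly rat}]_d, normK f z (M *m x) <= c * normK f z x.

(* A has coefficients in K written in the power basis 1, z, ..., z^(n-1)
   (polynomials of size <= n) with all rational coordinates bounded by 1 *)
Definition coords_bounded (n d : nat) (A : 'M[{poly rat}]_d) : Prop :=
  forall i j : 'I_d, (size (A i j) <= n)%N /\ forall l : nat, `|(A i j)`_l| <= 1.

Definition unitriangular (d : nat) (A : 'M[{poly rat}]_d) : Prop :=
  (forall i : 'I_d, A i i = 1) /\ (forall i j : 'I_d, (j < i)%N -> A i j = 0).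

Definition is_inverseK (z : algC) (d : nat) (A B : 'M[{poly rat}]_d) : Prop :=
  forall i j : 'I_d, ev ((A *m B) i j) z = (i == j)%:R.

(* Every embedding z |-> z^k (k coprime to f) of K into C turns the Hermitian
   form into a sum of standard Hermitian forms, so it suffices to bound the
   complex matrices sigma_k(A) and sigma_k(B) uniformly in k; sigma_k(B) is the
   inverse of sigma_k(A) because AB - 1 vanishes at z, hence at all its
   conjugates.  The entries of sigma_k(A) have modulus at most n, so
   Cauchy-Schwarz gives ||sigma_k(A)|| <= dn.  For the inverse, back
   substitution in the unitriangular system gives
   |w_i| <= |u_i| + n sum_{j>i} |w_j|, hence sum |w| <= (n+1)^d sum |u|
   (a discrete Gronwall inequality) and ||sigma_k(A)^-1|| <= sqrt d (n+1)^d,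
   which is at most (2n)^(2d). *)

From HB Require Import structures.
From mathcomp Require Import all_boot all_order all_algebra algC cyclotomic.
From mathcomp Require Import ring.
Set Implicit Arguments. Unset Strict Implicit. Unset Printing Implicit Defensive.
Import Order.TTheory GRing.Theory Num.Theory.
Local Open Scope ring_scope.

Section NormBounds.
Variable R : numDomainType.

Lemma sqr_sum_le_card_sum_sqr (d : nat) (y : 'I_d -> R) :
  (forall i, 0 <= y i) -> (\sum_i y i) ^+ 2 <= d%:R * \sum_i y i ^+ 2.
Proof.
move=> y_ge0.
have sum_sqr_diff : \sum_i \sum_j (y i - y j) ^+ 2 =
    2%:R * (d%:R * \sum_i y i ^+ 2 - (\sum_i y i) ^+ 2).
  have row_sum i : \sum_j (y i - y j) ^+ 2 =
      d%:R * y i ^+ 2 - 2%:R * y i * \sum_j y j + \sum_j y j ^+ 2.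
    have -> : d%:R * y i ^+ 2 = \sum_(j < d) y i ^+ 2.
      by rewrite sumr_const card_ord mulr_natl.
    rewrite mulr_sumr -sumrB -big_split /=.
    by apply: eq_bigr => j _; ring.
  under eq_bigr => i _ do rewrite row_sum.
  rewrite big_split /= sumrB -mulr_sumr -mulr_suml sumr_const card_ord mulr_natl -mulr_sumr.
  ring.
have : 0 <= \sum_i \sum_j (y i - y j) ^+ 2.
  apply: sumr_ge0 => i _; apply: sumr_ge0 => j _.
  by rewrite -real_normK ?exprn_ge0 // rpredB ?ger0_real.
by rewrite sum_sqr_diff pmulr_rge0 // subr_ge0.
Qed.

Lemma sum_sqr_le_sqr_sum (d : nat) (y : 'I_d -> R) :
  (forall i, 0 <= y i) -> \sum_i y i ^+ 2 <= (\sum_i y i) ^+ 2.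
Proof.
move=> y_ge0; rewrite expr2 mulr_suml; apply: ler_sum => i _.
rewrite expr2 ler_wpM2l // (bigD1 i) //= lerDl.
by apply: sumr_ge0 => j _.
Qed.

Lemma sum_sqr_norm_mulmx_le (d : nat) (a : 'I_d -> 'I_d -> R) (m : R) (u : 'I_d -> R) :
  0 <= m -> (forall i j, `|a i j| <= m) ->
  \sum_i `|\sum_j a i j * u j| ^+ 2 <= (d%:R * m) ^+ 2 * \sum_j `|u j| ^+ 2.
Proof.
move=> m_ge0 a_le.
have row_le i : `|\sum_j a i j * u j| ^+ 2 <= m ^+ 2 * (d%:R * \sum_j `|u j| ^+ 2).
  apply: le_trans (_ : (m * \sum_j `|u j|) ^+ 2 <= _).
    rewrite lerXn2r ?nnegrE ?mulr_ge0 ?sumr_ge0 //.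
    apply: le_trans (ler_norm_sum _ _ _) _.
    by rewrite mulr_sumr; apply: ler_sum => j _; rewrite normrM ler_wpM2r.
  by rewrite exprMn ler_wpM2l ?exprn_ge0 // sqr_sum_le_card_sum_sqr.
apply: le_trans (ler_sum _ (fun i _ => row_le i)) _.
rewrite sumr_const card_ord -mulr_natl le_eqVlt; apply/orP; left; apply/eqP; ring.
Qed.

Definition suffix_sum (d : nat) (g : 'I_d -> R) (k : nat) : R :=
  \sum_(j : 'I_d | (k <= j)%N) g j.

Lemma suffix_sum0 (d : nat) (g : 'I_d -> R) : suffix_sum g 0 = \sum_j g j.
Proof. exact: eq_bigl. Qed.

Lemma suffix_sumS (d : nat) (g : 'I_d -> R) (i : 'I_d) :
  suffix_sum g i = g i + suffix_sum g i.+1.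
Proof.
rewrite /suffix_sum (bigD1 i) //=; congr (_ + _); apply: eq_bigl => j.
by rewrite ltn_neqAle andbC eq_sym.
Qed.

Lemma suffix_sum_gronwall (d : nat) (g h : 'I_d -> R) (m : R) :
  0 <= m -> (forall i, 0 <= h i) ->
  (forall i : 'I_d, g i <= h i + m * suffix_sum g i.+1) ->
  \sum_i g i <= (m + 1) ^+ d * \sum_i h i.
Proof.
move=> m_ge0 h_ge0 g_le.
have m1_ge1 : 1 <= m + 1 by rewrite lerDr.
suff suffix_le k : (k <= d)%N ->
    suffix_sum g (d - k) <= (m + 1) ^+ k * suffix_sum h (d - k).
  by have := suffix_le d (leqnn d); rewrite subnn !suffix_sum0.
elim: k => [_|k IHk lt_k_d].
  rewrite subn0 /suffix_sum big_pred0 => [|j]; last by rewrite leqNgt ltn_ord.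
  by rewrite expr0 mul1r sumr_ge0.
have lt_i_d : (d - k.+1 < d)%N by rewrite ltn_subrL (leq_ltn_trans _ lt_k_d).
pose i := Ordinal lt_i_d.
have di : (d - k)%N = i.+1 by rewrite /= subnSK.
have := IHk (ltnW lt_k_d); rewrite di => IHi.
change (suffix_sum g i <= (m + 1) ^+ k.+1 * suffix_sum h i).
rewrite !suffix_sumS.
apply: le_trans (_ : h i + (m + 1) * suffix_sum g i.+1 <= _).
  by rewrite mulrDl mul1r addrA lerD2r; apply: g_le.
rewrite mulrDr exprS -!mulrA lerD ?ler_wpM2l ?(le_trans ler01) //.
by rewrite mulrA -exprS ler_peMl ?exprn_ege1.
Qed.

Section UnitriangularSystem.
Variables (d : nat) (a : 'I_d -> 'I_d -> R) (m : R).
Hypotheses (m_ge0 : 0 <= m) (a_le : forall i j, `|a i j| <= m).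
Hypotheses (a_diag : forall i, a i i = 1) (a_triu : forall i j : 'I_d, (j < i)%N -> a i j = 0).
Variables (w u : 'I_d -> R).
Hypothesis a_w : forall i, \sum_j a i j * w j = u i.

Lemma norm_backsubst_le (i : 'I_d) :
  `|w i| <= `|u i| + m * suffix_sum (fun j => `|w j|) i.+1.
Proof.
have -> : w i = u i - \sum_(j | j != i) a i j * w j.
  by rewrite -a_w (bigD1 i) //= a_diag mul1r addrK.
apply: le_trans (ler_normB _ _) _; rewrite lerD2l.
apply: le_trans (ler_norm_sum _ _ _) _.
rewrite /suffix_sum mulr_sumr big_mkcond [X in _ <= X]big_mkcond /=.
apply: ler_sum => j _; case: (ltngtP i j) => [lt_ij|lt_ji|/val_inj->].
- by rewrite -val_eqE (gtn_eqF lt_ij) normrM ler_wpM2r.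
- by rewrite -val_eqE (ltn_eqF lt_ji) a_triu ?mul0r ?normr0.
- by rewrite eqxx.
Qed.

Lemma sum_sqr_norm_backsubst_le :
  \sum_j `|w j| ^+ 2 <= (d%:R * (m + 1) ^+ (2 * d)) * \sum_j `|u j| ^+ 2.
Proof.
have sum_w_le := suffix_sum_gronwall m_ge0 (fun j => normr_ge0 (u j)) norm_backsubst_le.
apply: le_trans (sum_sqr_le_sqr_sum (fun j => normr_ge0 (w j))) _.
apply: le_trans (_ : ((m + 1) ^+ d * \sum_j `|u j|) ^+ 2 <= _).
  have sum_norm_ge0 (v : 'I_d -> R) : 0 <= \sum_j `|v j| by apply: sumr_ge0.
  by rewrite lerXn2r ?nnegrE ?mulr_ge0 ?exprn_ge0 ?addr_ge0 ?sum_norm_ge0.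
rewrite exprMn -exprM mulnC [d%:R * _]mulrC -mulrA ler_wpM2l ?exprn_ge0 ?addr_ge0 //.
by rewrite sqr_sum_le_card_sum_sqr.
Qed.

End UnitriangularSystem.

End NormBounds.

Lemma ev_sum (I : finType) (F : I -> {poly rat}) (x : algC) :
  ev (\sum_i F i) x = \sum_i ev (F i) x.
Proof. by rewrite /ev rmorph_sum horner_sum. Qed.

Lemma evM (p q : {poly rat}) (x : algC) : ev (p * q) x = ev p x * ev q x.
Proof. by rewrite /ev rmorphM hornerM. Qed.

Lemma evB (p q : {poly rat}) (x : algC) : ev (p - q) x = ev p x - ev q x.
Proof. by rewrite /ev rmorphB hornerD hornerN. Qed.

Lemma ev_nat (k : nat) (x : algC) : ev k%:R x = k%:R.
Proof. by rewrite /ev rmorph_nat -polyC_natr hornerC. Qed.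

Lemma ev_conjC (p : {poly rat}) (x : algC) : ev p x^* = (ev p x)^*.
Proof.
rewrite /ev -horner_map -map_poly_comp; congr (_.[_]).
by apply: eq_map_poly => a /=; rewrite fmorph_rat.
Qed.

Lemma ev_mulmx (d : nat) (M : 'M[{poly rat}]_d) (v : 'cV[{poly rat}]_d) (x : algC) t :
  ev ((M *m v) t 0) x = \sum_j ev (M t j) x * ev (v j 0) x.
Proof. by rewrite mxE ev_sum; apply: eq_bigr => j _; rewrite evM. Qed.

Lemma norm_ev_le (n : nat) (p : {poly rat}) (x : algC) :
  (size p <= n)%N -> (forall l, `|p`_l| <= 1) -> `|x| = 1 -> `|ev p x| <= n%:R.
Proof.
move=> size_p coef_le norm_x; rewrite /ev horner_coef size_map_poly.
apply: le_trans (ler_norm_sum _ _ _) _.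
apply: le_trans (_ : _ <= \sum_(i < size p) (1 : algC)) _.
  apply: ler_sum => i _; rewrite coef_map normrM normrX norm_x expr1n mulr1.
  by rewrite -ratr_norm -(rmorph1 ratr) ler_rat.
by rewrite sumr_const card_ord ler_nat.
Qed.

Lemma ev_prim_root_exp (f : nat) (z : algC) (p q : {poly rat}) (k : nat) :
  f.-primitive_root z -> coprime k f -> ev p z = ev q z -> ev p (z ^+ k) = ev q (z ^+ k).
Proof.
move=> prim_z cop_kf /eqP; rewrite -subr_eq0 -evB => /eqP root_z.
apply/eqP; rewrite -subr_eq0 -evB.
have [minz [minzE _] minz_dvd] := minCpolyP z.
have /divpK <- : minz %| p - q by rewrite -minz_dvd /root -/(ev _ z) root_z.
have : root (map_poly ratr minz) (z ^+ k).
  by rewrite -minzE (minCpoly_cyclotomic prim_z) root_cyclotomic ?prim_root_exp_coprime.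
by rewrite /root -/(ev _ _) evM => /eqP->; rewrite mulr0.
Qed.

Section UnityRoot.
Variables (f : nat) (x : algC).
Hypotheses (f_gt0 : (0 < f)%N) (x_unity : x ^+ f = 1).

Lemma norm_unity_root : `|x| = 1.
Proof.
by apply/eqP; rewrite -(pexpr_eq1 f_gt0) ?normr_ge0 // -normrX x_unity normr1.
Qed.

Lemma conjC_unity_root : x^* = x ^+ f.-1.
Proof.
have x_neq0 : x != 0 by rewrite -normr_eq0 norm_unity_root oner_neq0.
apply: (mulfI x_neq0); rewrite -exprS prednK // x_unity.
by rewrite -normCK norm_unity_root expr1n.
Qed.

Lemma ev_mul_conjK (p : {poly rat}) : ev (p * conjK f p) x = `|ev p x| ^+ 2.
Proof.
rewrite evM /conjK /ev map_comp_poly horner_comp map_polyXn hornerXn.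
by rewrite -conjC_unity_root -/(ev p x^*) ev_conjC normCK.
Qed.

End UnityRoot.

Lemma leq_card_mul_succ_exp (d n : nat) : (0 < n)%N ->
  (d * (n + 1) ^ (2 * d) <= ((2 * n) ^ (2 * d)) ^ 2)%N.
Proof.
case: d => [//|d] n_gt0; rewrite expnS expn1 leq_mul //.
  apply: leq_trans (ltnW (ltn_expl d.+1 (isT : (1 < 2)%N))) _.
  apply: leq_trans (_ : (2 ^ (2 * d.+1) <= _)%N).
    by rewrite leq_pexp2l // leq_pmull.
  by rewrite leq_exp2r ?muln_gt0 // leq_pmulr.
by rewrite leq_exp2r ?muln_gt0 // mul2n -addnn leq_add2l.
Qed.

Section Conjugates.
Variables (f : nat) (z : algC).
Hypotheses (f_gt0 : (0 < f)%N) (prim_z : f.-primitive_root z).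

Lemma prim_root_exp_unity (k : nat) : (z ^+ k) ^+ f = 1.
Proof. by rewrite -exprM mulnC exprM (prim_expr_order prim_z) expr1n. Qed.

Lemma hermK_self (d : nat) (x : 'cV[{poly rat}]_d) :
  hermK f z x x = \sum_(k < f | coprime k f) \sum_t `|ev (x t 0) (z ^+ k)| ^+ 2.
Proof.
rewrite /hermK /trK exchange_big /=; apply: eq_bigr => k _; apply: eq_bigr => t _.
by rewrite (ev_mul_conjK f_gt0 (prim_root_exp_unity k)).
Qed.

Lemma hermK_self_ge0 (d : nat) (x : 'cV[{poly rat}]_d) : 0 <= hermK f z x x.
Proof.
by rewrite hermK_self; apply: sumr_ge0 => k _; apply: sumr_ge0 => t _; rewrite exprn_ge0.
Qed.

Lemma opnorm_le_conjugates (d : nat) (M : 'M[{poly rat}]_d) (c : algC) : 0 <= c ->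
  (forall (x : 'cV[{poly rat}]_d) (k : nat), coprime k f ->
     \sum_t `|ev ((M *m x) t 0) (z ^+ k)| ^+ 2 <= c ^+ 2 * \sum_t `|ev (x t 0) (z ^+ k)| ^+ 2) ->
  opnorm_le f z M c.
Proof.
move=> c_ge0 conj_le x; rewrite /normK -(sqrCK c_ge0).
rewrite -sqrtCM ?nnegrE ?exprn_ge0 ?hermK_self_ge0 //.
rewrite ler_sqrtC ?nnegrE ?mulr_ge0 ?exprn_ge0 ?hermK_self_ge0 //.
by rewrite !hermK_self mulr_sumr; apply: ler_sum => k; apply: conj_le.
Qed.

Section BoundedMatrix.
Variables (d : nat) (A : 'M[{poly rat}]_d).
Let n := totient f.
Hypothesis A_bounded : coords_bounded n A.

Lemma norm_ev_entry_le (k : nat) (i j : 'I_d) : `|ev (A i j) (z ^+ k)| <= n%:R.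
Proof.
have [size_A coef_A] := A_bounded i j.
exact: norm_ev_le size_A coef_A (norm_unity_root f_gt0 (prim_root_exp_unity k)).
Qed.

Lemma opnorm_le_coords_bounded : opnorm_le f z A (d%:R * sqrtC (n%:R ^+ 3)).
Proof.
apply: opnorm_le_conjugates => [|x k _]; first by rewrite mulr_ge0 ?sqrtC_ge0 ?exprn_ge0.
under eq_bigr => t _ do rewrite ev_mulmx.
apply: le_trans (sum_sqr_norm_mulmx_le _ (ler0n _ n) (@norm_ev_entry_le k)) _.
apply: ler_wpM2r; first by apply: sumr_ge0 => t _; rewrite exprn_ge0.
rewrite !exprMn sqrtCK; apply: ler_wpM2l; first exact: exprn_ge0.
by rewrite -!natrX ler_nat leq_pexp2l ?totient_gt0.
Qed.

Lemma opnorm_le_inverseK (B : 'M[{poly rat}]_d) :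
  unitriangular A -> is_inverseK z A B -> opnorm_le f z B ((2 * n)%:R ^+ (2 * d)).
Proof.
move=> [A_diag A_triu] AB1.
apply: opnorm_le_conjugates => [|x k cop_kf]; first by rewrite exprn_ge0.
pose y := z ^+ k.
have AB1_y i j : ev ((A *m B) i j) y = (i == j)%:R.
  rewrite -(ev_nat _ y); apply: ev_prim_root_exp prim_z cop_kf _.
  by rewrite AB1 ev_nat.
have A_Bx i : \sum_j ev (A i j) y * ev ((B *m x) j 0) y = ev (x i 0) y.
  rewrite -ev_mulmx mulmxA ev_mulmx (bigD1 i) //= AB1_y eqxx mul1r big1 ?addr0 // => j ji.
  by rewrite AB1_y eq_sym (negbTE ji) mul0r.
apply: le_trans (sum_sqr_norm_backsubst_le (ler0n _ n) (@norm_ev_entry_le k) _ _ A_Bx) _.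
- by move=> i; rewrite A_diag -[1]/(1%:R) ev_nat.
- by move=> i j lt_ji; rewrite A_triu // -[0]/(0%:R) ev_nat.
apply: ler_wpM2r; first by apply: sumr_ge0 => t _; rewrite exprn_ge0.
rewrite natr1 -!natrX -natrM ler_nat -addn1.
by rewrite leq_card_mul_succ_exp ?totient_gt0.
Qed.

End BoundedMatrix.

End Conjugates.

Theorem lemma13 :
  exists C : nat,
  forall (f : nat) (z : algC), (1 <= f)%N -> f.-primitive_root z ->
  forall (d : nat) (A : 'M[{poly rat}]_d),
    unitriangular A -> coords_bounded (totient f) A ->
    opnorm_le f z A (d%:R * sqrtC ((totient f)%:R ^+ 3)) /\
    (forall B : 'M[{poly rat}]_d, is_inverseK z A B ->
       opnorm_le f z B (((2 * totient f)%:R) ^+ (C * d))).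
Proof.
exists 2%N => f z f_gt0 prim_z d A A_unitri A_bounded; split.
  exact: opnorm_le_coords_bounded.
by move=> B AB1; apply: opnorm_le_inverseK.
Qed.
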